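(* For every integer $n\ge 3$, let $\kappa(K_n\times K_n)$ denote the largest integer $k$ such that $K_n\times K_n$ has a weak $k$-resolving set. Then $$\kappa(K_n\times K_n)=\begin{cases}6, & n=3;\\ 2n+2, & n\ge 4.\end{cases}$$
   Context: $K_n\times K_n$ denotes the direct product of two complete graphs on $n$ vertices: its vertex set is $V=[n]\times[n]$ (where $[n]=\{1,\dots,n\}$), and $(i,j)$ is adjacent to $(i',j')$ if and only if $i\neq i'$ and $j\ne j'$. For a connected graph $G$ with distance $d_G$, vertices $x,y,z$ and a set $S\subseteq V(G)$, let $\Delta_z(x,y)=|d_G(x,z)-d_G(y,z)|$ and $\Delta_S(x,y)=\sum_{z\in S}\Delta_z(x,y)$. For an integer $k\ge1$, a set $S\subseteq V(G)$ is a weak $k$-resolving set of $G$ if $\Delta_S(x,y)\ge k$ for every two distinct vertices $x,y\in V(G)$. *)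

From mathcomp Require Import all_boot.
Set Implicit Arguments. Unset Strict Implicit. Unset Printing Implicit Defensive.

Section Graphs.
Variable T : finType.
Variable e : rel T.

Fixpoint ball (k : nat) (x : T) : {set T} :=
  match k with
  | 0 => [set x]
  | k'.+1 => ball k' x :|: [set z | [exists w in ball k' x, e w z]]
  end.

(* shortest-path distance: least k with y in ball k x
   (equals #|T| if y is unreachable; irrelevant for connected graphs) *)
Definition gdist (x y : T) : nat :=
  find (fun k => y \in ball k x) (iota 0 #|T|).

Definition absdiff (a b : nat) : nat := (a - b) + (b - a).

Definition Delta_z (z x y : T) : nat := absdiff (gdist x z) (gdist y z).

Definition Delta_S (S : {set T}) (x y : T) : nat := \sum_(z in S) Delta_z z x y.

Definition weak_k_resolving (k : nat) (S : {set T}) : Prop :=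
  forall x y : T, x != y -> k <= Delta_S S x y.

Definition connected_graph : Prop := forall x y : T, y \in ball #|T| x.
End Graphs.

Definition KnKn_adj (n : nat) : rel ('I_n * 'I_n) :=
  fun u v => (u.1 != v.1) && (u.2 != v.2).
Arguments KnKn_adj n : clear implicits.

From mathcomp Require Import all_boot zify.
Set Implicit Arguments. Unset Strict Implicit. Unset Printing Implicit Defensive.

(* Two distinct non-adjacent vertices of K_n x K_n (n >= 3) have a common
   neighbour, so all distances are 0, 1 or 2. Since Delta_S only grows with S,
   the whole vertex set V is an optimal candidate and kappa is the least value
   of Delta_V(x, y) over distinct pairs. Summing over z, pairs sharing a
   coordinate give 2n + 2 and the other pairs give 4n - 6; the minimum is 6 for
   n = 3 and 2n + 2 for n >= 4. *)

Section WeakResolvingSets.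
Variables (T : finType) (e : rel T).

Lemma Delta_S_setT x y : Delta_S e [set: T] x y = \sum_z Delta_z e z x y.
Proof. by apply: eq_bigl => z; rewrite inE. Qed.

Lemma leq_Delta_S (S S' : {set T}) x y :
  S \subset S' -> Delta_S e S x y <= Delta_S e S' x y.
Proof.
move=> /subsetP sSS'; rewrite /Delta_S big_mkcond [leqRHS]big_mkcond /=.
by apply: leq_sum => z _; case: ifP => // /sSS' ->.
Qed.

Lemma weak_k_resolving_setT k S :
  weak_k_resolving e k S -> weak_k_resolving e k [set: T].
Proof. by move=> hS x y /hS /leq_trans; apply; apply/leq_Delta_S/subsetT. Qed.

Lemma mem_ball0 x y : (y \in ball e 0 x) = (x == y).
Proof. by rewrite /= in_set1 eq_sym. Qed.

Lemma mem_ball1 x y : (y \in ball e 1 x) = (x == y) || e x y.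
Proof.
rewrite /= in_setU mem_ball0 inE; congr orb.
by apply/existsP/idP => [[w /andP[/set1P -> //]]|exy]; exists x; rewrite in_set1 eqxx.
Qed.

Hypothesis common_neighbour :
  forall x y, x != y -> ~~ e x y -> exists w, e x w && e w y.

Lemma mem_ball2 x y : y \in ball e 2 x.
Proof.
rewrite [ball _ 2 _]/= in_setU -/(ball e 1 x) mem_ball1 inE.
have [->|nxy] := eqVneq x y => //=.
have [//|/(common_neighbour nxy) [w /andP[exw ewy]]] := boolP (e x y).
by apply/orP; right; apply/existsP; exists w; rewrite mem_ball1 exw orbT.
Qed.

Lemma gdist_diam2 x y : 2 < #|T| ->
  gdist e x y = if x == y then 0 else if e x y then 1 else 2.
Proof.
move=> T_gt2; rewrite /gdist.
have [m ->] : exists m, #|T| = m.+3 by exists (#|T| - 3); lia.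
rewrite /= mem_ball0 mem_ball1 mem_ball2.
by case: (x == y); case: (e x y).
Qed.

End WeakResolvingSets.

Lemma sum_nat_of_bool (T : finType) (P : pred T) : \sum_z (P z : nat) = #|P|.
Proof. by rewrite -sum1_card [RHS]big_mkcond. Qed.

Lemma sum_nat_eq1 (T : finType) (x : T) : \sum_z (z == x : nat) = 1.
Proof. by rewrite sum_nat_of_bool card1. Qed.

Section KnKn.
Variables (n : nat) (n_gt2 : 2 < n).
Local Notation V := ('I_n * 'I_n)%type.
Local Notation adj := (KnKn_adj n).

Lemma exists_ord_neq2 (b d : 'I_n) : exists j : 'I_n, (j != b) && (j != d).
Proof.
have : 0 < #|~: [set b; d]|.
  by have := cardsC [set b; d]; rewrite card_ord cards2; case: (b != d) => /=; lia.
by case/card_gt0P => j; rewrite !inE negb_or; exists j.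
Qed.

Lemma KnKn_common_neighbour (x y : V) : exists w, adj x w && adj w y.
Proof.
have [i /andP[ix iy]] := exists_ord_neq2 x.1 y.1.
have [j /andP[jx jy]] := exists_ord_neq2 x.2 y.2.
by exists (i, j); rewrite /KnKn_adj /= iy jy !(eq_sym _ i) !(eq_sym _ j) ix jx.
Qed.

Lemma gdist_KnKn (x y : V) :
  gdist adj x y = if x == y then 0 else if adj x y then 1 else 2.
Proof.
apply: gdist_diam2 => [u v _ _|]; first exact: KnKn_common_neighbour.
by rewrite card_prod card_ord; nia.
Qed.

Lemma KnKn_adj_swap (u v : V) : adj (swap_pair u) (swap_pair v) = adj u v.
Proof. exact: andbC. Qed.

Lemma Delta_z_swap (z x y : V) :
  Delta_z adj (swap_pair z) (swap_pair x) (swap_pair y) = Delta_z adj z x y.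
Proof.
by rewrite /Delta_z !gdist_KnKn !KnKn_adj_swap !(inj_eq (can_inj swap_pairK)).
Qed.

Lemma Delta_S_setT_swap (x y : V) :
  Delta_S adj [set: V] (swap_pair x) (swap_pair y) = Delta_S adj [set: V] x y.
Proof.
rewrite !Delta_S_setT (reindex_inj (can_inj swap_pairK)) /=.
by apply: eq_bigr => z _; rewrite Delta_z_swap.
Qed.

Lemma Delta_z_row (a b d : 'I_n) (z : V) : b != d ->
  Delta_z adj z (a, b) (a, d) =
  (z.2 == b) + (z.2 == d) + (z == (a, b)) + (z == (a, d)).
Proof.
case: z => i j nbd.
rewrite /Delta_z /absdiff !gdist_KnKn /KnKn_adj /= !xpair_eqE.
rewrite !(eq_sym a) !(eq_sym b) !(eq_sym d).
by case: (i == a); case: (j =P b) => [->|_]; rewrite ?(negbTE nbd) //=;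
  case: (j == d).
Qed.

(* The correction terms sit on the left so that the identity has no truncated
   subtraction and can be summed termwise. *)
Lemma Delta_z_diag (a b c d : 'I_n) (z : V) : a != c -> b != d ->
  Delta_z adj z (a, b) (c, d) + 2 * (z == (a, d)) + 2 * (z == (c, b))
    + (z == (a, b)) + (z == (c, d)) =
  (z.1 == a) + (z.1 == c) + (z.2 == b) + (z.2 == d).
Proof.
case: z => i j nac nbd.
rewrite /Delta_z /absdiff !gdist_KnKn /KnKn_adj /= !xpair_eqE.
rewrite !(eq_sym a) !(eq_sym b) !(eq_sym c) !(eq_sym d).
by case: (i =P a) => [->|_]; rewrite ?(negbTE nac) //=; case: (i == c);
  case: (j =P b) => [->|_]; rewrite ?(negbTE nbd) //=; case: (j == d).
Qed.

Lemma sum_fst_eq (a : 'I_n) : \sum_(z : V) (z.1 == a : nat) = n.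
Proof.
rewrite sum_nat_of_bool -cardsE.
have -> : [set z in [pred z : V | z.1 == a]] = setX [set a] [set: 'I_n].
  by apply/setP => -[i j]; rewrite !inE andbT.
by rewrite cardsX cards1 cardsT card_ord mul1n.
Qed.

Lemma sum_snd_eq (b : 'I_n) : \sum_(z : V) (z.2 == b : nat) = n.
Proof. by rewrite (reindex_inj (can_inj swap_pairK)) sum_fst_eq. Qed.

Lemma Delta_S_setT_row (a b d : 'I_n) : b != d ->
  Delta_S adj [set: V] (a, b) (a, d) = 2 * n + 2.
Proof.
move=> nbd; rewrite Delta_S_setT; under eq_bigr do rewrite Delta_z_row //.
by rewrite !big_split /= !sum_snd_eq !sum_nat_eq1; lia.
Qed.

Lemma Delta_S_setT_col (a b c : 'I_n) : a != c ->
  Delta_S adj [set: V] (a, b) (c, b) = 2 * n + 2.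
Proof. by move=> nac; rewrite -Delta_S_setT_swap Delta_S_setT_row. Qed.

Lemma Delta_S_setT_diag (a b c d : 'I_n) : a != c -> b != d ->
  Delta_S adj [set: V] (a, b) (c, d) = 4 * n - 6.
Proof.
move=> nac nbd.
have := (eq_bigr _ (fun z _ => Delta_z_diag z nac nbd) : \sum_(z : V) _ = _).
rewrite Delta_S_setT; move: (Delta_z adj) => D.
rewrite !big_split /= big1_eq !sum_fst_eq !sum_snd_eq !sum_nat_eq1; lia.
Qed.

Lemma Delta_S_setT_KnKn (x y : V) : x != y ->
  Delta_S adj [set: V] x y =
  if (x.1 == y.1) || (x.2 == y.2) then 2 * n + 2 else 4 * n - 6.
Proof.
case: x y => [a b] [c d] /=; rewrite xpair_eqE negb_and.
have [<- /= nbd|nac _] := eqVneq a c; first exact: Delta_S_setT_row.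
by have [<-|nbd] := eqVneq b d; [exact: Delta_S_setT_col | exact: Delta_S_setT_diag].
Qed.

End KnKn.

Theorem mainTheorem1 (n : nat) (hn : 3 <= n) :
  let K := if n == 3 then 6 else (2 * n + 2) in
  (exists S : {set 'I_n * 'I_n}, weak_k_resolving (KnKn_adj n) K S) /\
  (forall k : nat, 1 <= k ->
     (exists S : {set 'I_n * 'I_n}, weak_k_resolving (KnKn_adj n) k S) ->
     k <= K).
Proof.
move=> K; split.
  exists [set: 'I_n * 'I_n] => x y /(Delta_S_setT_KnKn hn) ->.
  by rewrite /K; case: eqP => ?; case: ifP => _; lia.
move=> k _ [S /weak_k_resolving_setT hS].
pose i0 : 'I_n := Ordinal (ltnW (ltnW hn)); pose i1 : 'I_n := Ordinal (ltnW hn).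
have ni01 : i0 != i1 by [].
rewrite /K; case: eqP => [n3|_].
  by have := hS (i0, i0) (i1, i1); rewrite Delta_S_setT_KnKn // xpair_eqE ni01 /= n3; apply.
by have := hS (i0, i0) (i0, i1); rewrite Delta_S_setT_KnKn // xpair_eqE ni01 eqxx; apply.
Qed.
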